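(* Let $x\in\mathbb{R}^d$, $V\subseteq\{1,\dots,d\}$ (of any parity), and let $\theta\in\{\pm1\}^d$ with $\theta_i=1$ for $i\in V$ and $\theta_i=-1$ for $i\notin V$. Let $v = \Pi_{\{w\in\mathbb{R}^d:\theta^\top w = |V|-1\}}(x)$ and suppose $v\notin[0,1]^d$. Then there exists $i\in\{1,\dots,d\}$ such that either ($v_i>1$ and $\theta_i=1$) or ($v_i<0$ and $\theta_i=-1$).
   Context: $\Pi_C(x)$ denotes the Euclidean projection of $x$ onto a closed convex set $C$. *)

From mathcomp Require Import all_boot all_order all_algebra.
From mathcomp Require Import reals.
Set Implicit Arguments. Unset Strict Implicit. Unset Printing Implicit Defensive.
Import Order.TTheory GRing.Theory Num.Theory.
Local Open Scope ring_scope.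

(* Vectors of R^d are row vectors 'rV[R]_d; coordinates indexed by 'I_d
   (index i : 'I_d stands for coordinate i+1 of the paper). *)

Definition sqnorm (R : realType) (d : nat) (u : 'rV[R]_d) : R :=
  \sum_(i < d) u ord0 i ^+ 2.

Definition dotv (R : realType) (d : nat) (u w : 'rV[R]_d) : R :=
  \sum_(i < d) u ord0 i * w ord0 i.

Definition is_proj (R : realType) (d : nat) (C : 'rV[R]_d -> Prop)
  (x p : 'rV[R]_d) : Prop :=
  C p /\ forall w, C w -> sqnorm (x - p) <= sqnorm (x - w).

Definition in_unit_cube (R : realType) (d : nat) (v : 'rV[R]_d) : Prop :=
  forall i : 'I_d, 0 <= v ord0 i <= 1.

From mathcomp Require Import all_boot all_order all_algebra.
From mathcomp Require Import reals.
Set Implicit Arguments. Unset Strict Implicit. Unset Printing Implicit Defensive.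
Import Order.TTheory GRing.Theory Num.Theory.
Local Open Scope ring_scope.

(* With [b_i = [i \in V]], the signed
   coordinate [theta_i v_i] lies in [[b_i - 1, b_i]] exactly when [v_i] lies in
   [[0, 1]], and exceeds [b_i] exactly at a violation of the required kind.
   Without violations, the coordinate of [v] outside the cube falls below
   [b_j - 1], and summing gives [theta^T v < |V| - 1]. *)

Lemma signed_le_indicator (R : numDomainType) (b : bool) (a : R) :
  ((if b then 1 else -1) * a <= b%:R) = (if b then a <= 1 else 0 <= a).
Proof. by case: b; rewrite ?mul1r ?mulN1r ?oppr_le0. Qed.

Lemma indicator_sub1_le_signed (R : numDomainType) (b : bool) (a : R) :
  (b%:R - 1 <= (if b then 1 else -1) * a) = (if b then 0 <= a else a <= 1).
Proof. by case: b; rewrite ?mul1r ?mulN1r ?subrr // sub0r lerN2. Qed.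

Lemma ltr_sum_subr (R : numDomainType) (I : finType) (F G : I -> R)
  (c : R) (j : I) :
  (forall i, F i <= G i) -> F j < G j - c -> \sum_i F i < \sum_i G i - c.
Proof.
move=> leFG ltFGj; rewrite (bigD1 j) // [X in _ < X - _](bigD1 j) //= addrAC.
by apply: ltr_leD => //; apply: ler_sum.
Qed.

Lemma card_natr_sum (R : pzSemiRingType) (I : finType) (A : {set I}) :
  #|A|%:R = \sum_i (i \in A)%:R :> R.
Proof.
by rewrite -sum1_card natr_sum big_mkcond; apply: eq_bigr => i _; case: (i \in A).
Qed.

Theorem theorem3 (R : realType) (d : nat) (x : 'rV[R]_d) (V : {set 'I_d})
  (theta : 'rV[R]_d)
  (htheta : forall i : 'I_d, theta ord0 i = (if i \in V then 1 else -1))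
  (v : 'rV[R]_d)
  (hv : is_proj (fun w => dotv theta w = (#|V|%:R - 1)) x v)
  (hnot : ~ in_unit_cube v) :
  exists i : 'I_d,
    (1 < v ord0 i /\ theta ord0 i = 1) \/ (v ord0 i < 0 /\ theta ord0 i = -1).
Proof.
have [/existsP [i viol_i] | /existsPn no_viol] :=
  boolP [exists i, if i \in V then 1 < v ord0 i else v ord0 i < 0].
  by exists i; rewrite htheta; case: (i \in V) viol_i; [left | right].
have le_ind i : theta ord0 i * v ord0 i <= (i \in V)%:R.
  by rewrite htheta signed_le_indicator; case: (i \in V) (no_viol i); rewrite -leNgt.
have [j lt_j] : exists j, theta ord0 j * v ord0 j < (j \in V)%:R - 1.
  have [/existsP // | /existsPn ge_ind] :=
    boolP [exists j, theta ord0 j * v ord0 j < (j \in V)%:R - 1].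
  case: hnot => i.
  have := ge_ind i; have := le_ind i; rewrite -leNgt htheta.
  by rewrite signed_le_indicator indicator_sub1_le_signed; case: (i \in V) => -> ->.
have := ltr_sum_subr le_ind lt_j.
by rewrite -card_natr_sum -hv.1 ltxx.
Qed.
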